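(* Let $\Delta$ be a simplicial polytopal fan in $\mathbb{R}^d$ with ray generators $\mathbf{v}_1,\ldots,\mathbf{v}_n$ and let $m\ge1$. Let $\Delta^m$ be the polyhedral fan in $\mathbb{R}^{m\times d}$ whose cells are the products $\sigma_1\times\cdots\times\sigma_m$ with $\sigma_j\in\Delta$, and let $\Upsilon$ be the collection of all closed cones $\overline{U_G}$, $G\in\mathcal{G}$, such that $G$ has no matching of size $n$. Then $\Upsilon$ is strictly contained in $\Delta^m$ if and only if $m\ge n$.
   Context: A fan is simplicial if every cone is generated by linearly independent vectors; polytopal if it is the normal fan of a polytope. For $\mathbf{u}\in\mathbb{R}^d$, with $\sigma$ the cone of $\Delta$ containing $\mathbf{u}$ in its relative interior and $\mathbf{u}=\sum_{k\in I_\sigma}\lambda_k\mathbf{v}_k$ over the generators of $\sigma$, set $[\mathbf{u}]_i=\lambda_i$ for $i\in I_\sigma$ and $0$ otherwise. For $U\in\mathbb{R}^{m\times d}$ with rows $\mathbf{u}^{(1)},\ldots,\mathbf{u}^{(m)}$, $G_U$ is the bipartite graph on $[n]\sqcup[m]$ with $i\in[n]$ adjacent to $j\in[m]$ iff $[\mathbf{u}^{(j)}]_i>0$. $\mathcal{G}$ is the set of graphs of the form $G_U$, and for $G\in\mathcal{G}$, $U_G=\{U\in\mathbb{R}^{m\times d}\colon G_U=G\}$; the closures $\overline{U_G}$ are exactly the cells of $\Delta^m$. *)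

From HB Require Import structures.
From mathcomp Require Import all_boot all_order all_algebra.
From mathcomp Require Import boolp classical_sets reals topology normedtype.
Import numFieldNormedType.Exports.
Set Implicit Arguments. Unset Strict Implicit. Unset Printing Implicit Defensive.
Import Order.TTheory GRing.Theory Num.Theory.
Local Open Scope ring_scope.
Local Open Scope classical_set_scope.

Section Fans.
Variables (R : realType) (d n : nat).

Definition dotp (x y : 'rV[R]_d) : R := \sum_(k < d) x 0 k * y 0 k.

Definition cone_gen (v : 'I_n -> 'rV[R]_d) (S : {set 'I_n}) : set 'rV[R]_d :=
  [set u | exists lam : 'I_n -> R,
     (forall k, 0 <= lam k) /\ u = \sum_(k in S) lam k *: v k].

Definition fan_cones (v : 'I_n -> 'rV[R]_d) (cones : {set {set 'I_n}})
  : set (set 'rV[R]_d) :=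
  [set K | exists2 S, S \in cones & K = cone_gen v S].

Definition simplicial (v : 'I_n -> 'rV[R]_d) (cones : {set {set 'I_n}}) :=
  forall S, S \in cones -> forall lam : 'I_n -> R,
    \sum_(k in S) lam k *: v k = 0 -> forall k, k \in S -> lam k = 0.

Definition ray_generators (v : 'I_n -> 'rV[R]_d) (cones : {set {set 'I_n}}) :=
  (forall i, [set i]%SET \in cones) /\
  (forall i j, cone_gen v [set i]%SET = cone_gen v [set j]%SET -> i = j).

(* Polytope P = conv(pts).  For a linear functional c, argmax_pts c is the set
   of (indices of) points of pts maximizing c; the face of P maximizing c is
   their convex hull. The normal cone of the face F_c0 is
   { c | F_c0 is contained in F_c }. *)
Definition argmax_pts (k : nat) (pts : 'I_k -> 'rV[R]_d) (c : 'rV[R]_d) :=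
  [set i : 'I_k | forall j, dotp c (pts j) <= dotp c (pts i)].

Definition normal_cone (k : nat) (pts : 'I_k -> 'rV[R]_d) (c0 : 'rV[R]_d) :=
  [set c | argmax_pts pts c0 `<=` argmax_pts pts c].

Definition normal_fan (k : nat) (pts : 'I_k -> 'rV[R]_d) : set (set 'rV[R]_d) :=
  [set K | exists c0, K = normal_cone pts c0].

Definition polytopal (v : 'I_n -> 'rV[R]_d) (cones : {set {set 'I_n}}) :=
  exists (k : nat) (pts : 'I_k -> 'rV[R]_d),
    (0 < k)%N /\ fan_cones v cones = normal_fan pts.

Definition aff_hull (K : set 'rV[R]_d) : set 'rV[R]_d :=
  [set w | exists (k : nat) (c : 'I_k -> R) (x : 'I_k -> 'rV[R]_d),
     (forall i, K (x i)) /\ \sum_i c i = 1 /\ w = \sum_i c i *: x i].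

Definition relint (K : set 'rV[R]_d) : set 'rV[R]_d :=
  [set u | K u /\ exists A : set 'rV[R]_d, open A /\ A u /\
                    A `&` aff_hull K `<=` K].

Definition coord_rel (v : 'I_n -> 'rV[R]_d) (cones : {set {set 'I_n}})
    (u : 'rV[R]_d) (lam : 'I_n -> R) :=
  exists2 S, S \in cones &
    [/\ relint (cone_gen v S) u, (forall k, k \notin S -> lam k = 0)
      & u = \sum_(k in S) lam k *: v k].

Definition coord (v : 'I_n -> 'rV[R]_d) (cones : {set {set 'I_n}})
    (u : 'rV[R]_d) (i : 'I_n) : R :=
  match pselect (exists lam, coord_rel v cones u lam) with
  | left h => projT1 (cid h) i
  | right _ => 0
  end.

Variable m : nat.

Definition graphU (v : 'I_n -> 'rV[R]_d) (cones : {set {set 'I_n}})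
    (U : 'M[R]_(m, d)) : {set 'I_n * 'I_m} :=
  [set ij | 0 < coord v cones (row ij.2 U) ij.1].

Definition graphsG (v : 'I_n -> 'rV[R]_d) (cones : {set {set 'I_n}}) : set {set 'I_n * 'I_m} :=
  [set G | exists U, graphU v cones U = G].

Definition UG (v : 'I_n -> 'rV[R]_d) (cones : {set {set 'I_n}}) (G : {set 'I_n * 'I_m}) : set 'M[R]_(m, d) :=
  [set U | graphU v cones U = G].

Definition has_matching (G : {set 'I_n * 'I_m}) (s : nat) :=
  exists M : {set 'I_n * 'I_m}, [/\ M \subset G, #|M| = s &
    forall e1 e2, e1 \in M -> e2 \in M -> e1 != e2 ->
      e1.1 != e2.1 /\ e1.2 != e2.2].

Definition prod_fan (v : 'I_n -> 'rV[R]_d) (cones : {set {set 'I_n}}) : set (set 'M[R]_(m, d)) :=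
  [set C | exists sig : 'I_m -> {set 'I_n}, (forall j, sig j \in cones) /\
     C = [set U | forall j, cone_gen v (sig j) (row j U)]].

Definition Upsilon (v : 'I_n -> 'rV[R]_d) (cones : {set {set 'I_n}}) : set (set 'M[R]_(m, d)) :=
  [set C | exists2 G, graphsG v cones G /\ ~ has_matching G n &
     C = closure (UG v cones G)].

End Fans.

From Pilot Require Import Defs.
From HB Require Import structures.
From mathcomp Require Import all_boot all_order all_algebra.
From mathcomp Require Import boolp classical_sets reals topology normedtype.
From mathcomp.algebra_tactics Require Import lra.
Import numFieldNormedType.Exports.
Import Order.TTheory GRing.Theory Num.Theory.
Local Open Scope ring_scope.
Local Open Scope classical_set_scope.
Set Implicit Arguments. Unset Strict Implicit. Unset Printing Implicit Defensive.

(** Every cone of the simplicial fan is the normal cone of a face of the polytope,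
   so a point lies in the relative interior of exactly one cone, and the relative
   interior of a cone consists of the strictly positive combinations of its
   generators. Hence G_U records, row by row, the cones sigma_j whose relative
   interiors contain the rows of U; U_G is the product of these relative interiors
   and its closure is the cell sigma_1 x ... x sigma_m of Delta^m. Distinct
   generator sets span distinct cones, so Upsilon consists of the cells whose graph
   {(i, j) | i in sigma_j} has no matching of size n. The edges of a matching lie in
   distinct rows, so for m < n every cell is in Upsilon; for n <= m the cell with
   sigma_j = {j} for j < n has a perfect matching and is not. *)

Section Topology.
Variable R : realType.

Lemma continuous_sum (T : topologicalType) (I : Type) (r : seq I) (F : I -> T -> R) :
  (forall i, continuous (F i)) -> continuous (fun t => \sum_(i <- r) F i t).
Proof.
move=> cF; elim: r => [|i r IH].
  by under eq_fun do rewrite big_nil; exact: cst_continuous.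
by under eq_fun do rewrite big_cons; move=> t; apply: cvgD; [exact: cF | exact: IH].
Qed.

Lemma open_translate_small (V : normedModType R) (A : set V) x w :
  open A -> A x -> exists2 t : R, 0 < t & A (x + t *: w).
Proof.
rewrite openE => oA /oA /nbhs_normP [e e0 He].
have w1 : 0 < `|w| + 1 by rewrite ltr_wpDl.
exists (e / (`|w| + 1)); first by rewrite divr_gt0.
apply: He; rewrite /= opprD addNKr normrN normrZ gtr0_norm ?divr_gt0 //.
by rewrite mulrAC ltr_pdivrMr // ltr_pM2l // ltrDl.
Qed.

End Topology.

Section Dotp.
Variables (R : realType) (d : nat).
Implicit Types (x y p q : 'rV[R]_d).

Lemma dotpDl x y p : dotp (x + y) p = dotp x p + dotp y p.
Proof. by rewrite /dotp -big_split; apply: eq_bigr => k _; rewrite mxE mulrDl. Qed.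

Lemma dotpZl a x p : dotp (a *: x) p = a * dotp x p.
Proof. by rewrite /dotp mulr_sumr; apply: eq_bigr => k _; rewrite mxE mulrA. Qed.

Lemma dotpBr x p q : dotp x (p - q) = dotp x p - dotp x q.
Proof. by rewrite /dotp -sumrB; apply: eq_bigr => k _; rewrite !mxE mulrBr. Qed.

Lemma dotp_suml (I : finType) (P : pred I) (c : I -> R) (x : I -> 'rV[R]_d) p :
  dotp (\sum_(i | P i) c i *: x i) p = \sum_(i | P i) c i * dotp (x i) p.
Proof.
elim/big_rec2: _ => [|i y1 y2 _ <-]; last by rewrite dotpDl dotpZl.
by rewrite /dotp big1 // => k _; rewrite mxE mul0r.
Qed.

Lemma dotp_row_continuous (a : nat) (j : 'I_a) p :
  continuous (fun M : 'M[R]_(a, d) => dotp (row j M) p).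
Proof.
rewrite /dotp; under eq_fun do under eq_bigr do rewrite mxE.
apply: continuous_sum => k M.
apply: (continuous_comp (f := fun N : 'M_(a, d) => N j k) (g := fun x : R => x * p 0 k)).
  exact: coord_continuous.
exact: mulrr_continuous.
Qed.

Lemma dotp_continuous p : continuous (fun x => dotp x p).
Proof.
by have := dotp_row_continuous (j := ord0 : 'I_1) (p := p); under eq_fun do rewrite row_id.
Qed.

End Dotp.

Section AffineHull.
Variables (R : realType) (d : nat).
Implicit Types (K : set 'rV[R]_d) (x y p : 'rV[R]_d).

Lemma aff_hull_line K x y s : K x -> K y -> aff_hull K ((1 - s) *: x + s *: y).
Proof.
move=> Kx Ky; exists 2%N, (fun i : 'I_2 => if i == ord0 then 1 - s else s),
  (fun i : 'I_2 => if i == ord0 then x else y).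
split; first by move=> i; case: ifP.
by rewrite !big_ord_recr !big_ord0 /= !add0r subrK.
Qed.

Lemma aff_hull_dotp0 K p :
  (forall x, K x -> dotp x p = 0) -> forall y, aff_hull K y -> dotp y p = 0.
Proof.
move=> Kp _ [l [c [x [Kx [_ ->]]]]]; rewrite dotp_suml big1 // => i _.
by rewrite Kp // mulr0.
Qed.

End AffineHull.

Section SimplicialCone.
Variables (R : realType) (d n : nat) (v : 'I_n -> 'rV[R]_d) (cones : {set {set 'I_n}}).
Hypothesis hs : simplicial v cones.
Implicit Types (S : {set 'I_n}) (lam mu : 'I_n -> R).

Lemma cone_gen_sum S lam :
  (forall k, k \in S -> 0 <= lam k) -> cone_gen v S (\sum_(k in S) lam k *: v k).
Proof.
move=> lam0; exists (fun k => if k \in S then lam k else 0); split.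
  by move=> k; case: ifP => // /lam0.
by apply: eq_bigr => k ->.
Qed.

Lemma sum_delta_v S k : k \in S -> \sum_(s in S) (s == k)%:R *: v s = v k.
Proof.
move=> kS; rewrite (bigD1 k) //= eqxx scale1r big1 ?addr0 // => s /andP[_ /negbTE ->].
by rewrite scale0r.
Qed.

Lemma cone_gen_v S k : k \in S -> cone_gen v S (v k).
Proof. by move=> kS; rewrite -(sum_delta_v kS); apply: cone_gen_sum. Qed.

Lemma cone_gen0 S : cone_gen v S 0.
Proof. by exists (fun=> 0); split => //; rewrite big1 // => k _; rewrite scale0r. Qed.

Lemma cone_genZ S a x : 0 <= a -> cone_gen v S x -> cone_gen v S (a *: x).
Proof.
move=> a0 [lam [lam0 ->]]; exists (fun k => a * lam k); split.
  by move=> k; rewrite mulr_ge0.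
by rewrite scaler_sumr; under eq_bigr do rewrite scalerA.
Qed.

Lemma cone_gen1 i y : cone_gen v [set i]%SET y <-> exists2 t, 0 <= t & y = t *: v i.
Proof.
split => [[lam [lam0 ->]]|[t t0 ->]]; first by rewrite big_set1; exists (lam i).
by exists (fun=> t); rewrite big_set1.
Qed.

Lemma cone_gen1_sub i j a b : 0 < a -> 0 <= b -> a *: v i = b *: v j ->
  cone_gen v [set i]%SET `<=` cone_gen v [set j]%SET.
Proof.
move=> a0 b0 e y /cone_gen1 [t t0 ->]; apply/cone_gen1; exists (t / a * b).
  by rewrite mulr_ge0 // divr_ge0 // ltW.
by rewrite -scalerA -e scalerA divfK ?gt_eqF.
Qed.

Lemma simplicial_coef_uniq S lam mu : S \in cones ->
  \sum_(k in S) lam k *: v k = \sum_(k in S) mu k *: v k -> {in S, lam =1 mu}.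
Proof.
move=> Sc e k kS; apply/eqP; rewrite -subr_eq0; apply/eqP.
apply: (@hs _ Sc (fun k => lam k - mu k)) => //.
by under eq_bigr do rewrite scalerBl; rewrite sumrB e subrr.
Qed.

Lemma simplicial_ray_neq0 i : [set i]%SET \in cones -> v i != 0.
Proof.
move=> ic; apply/eqP => vi0.
have := @hs _ ic (fun=> 1); rewrite big_set1 scale1r => /(_ vi0 i (set11 i)).
by move/eqP; rewrite oner_eq0.
Qed.

Lemma cone_gen_extreme_ray S k x y : S \in cones -> k \in S ->
  cone_gen v S x -> cone_gen v S y -> x + y = v k -> exists2 t, 0 <= t & x = t *: v k.
Proof.
move=> Sc kS [lam [lam0 ->]] [mu [mu0 ->]] e.
have coef : {in S, forall s, lam s + mu s = (s == k)%:R}.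
  apply: simplicial_coef_uniq => //; rewrite sum_delta_v // -e -big_split /=.
  by apply: eq_bigr => s _; rewrite scalerDl.
exists (lam k) => //; rewrite (bigD1 k) //= big1 ?addr0 // => s /andP[sS sk].
have /eqP := coef s sS; rewrite (negbTE sk) paddr_eq0 // => /andP[/eqP -> _].
by rewrite scale0r.
Qed.

Lemma cone_gen_eq_ray S S' k : S \in cones -> [set k]%SET \in cones -> k \in S ->
  cone_gen v S = cone_gen v S' ->
  exists2 l, l \in S' & cone_gen v [set l]%SET = cone_gen v [set k]%SET.
Proof.
(* Some term mu_l v_l of an expansion of v_k over S' is nonzero, and since v_k
   spans an extreme ray of cone S = cone S', that term is a positive multiple of v_k. *)
move=> Sc kc kS E; have : cone_gen v S' (v k) by rewrite -E; exact: cone_gen_v.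
case=> mu [mu0 vk].
have [l lS' mul0] : exists2 l, l \in S' & mu l *: v l != 0.
  apply/exists_inP; apply: contraT; rewrite negb_exists_in => /forall_inP mu_v0.
  by have := simplicial_ray_neq0 kc; rewrite vk big1 ?eqxx // => l /mu_v0/negPn/eqP.
have [t t0 e] : exists2 t, 0 <= t & mu l *: v l = t *: v k.
  apply: (cone_gen_extreme_ray (y := \sum_(s in S' | s != l) mu s *: v s) Sc kS).
  - by rewrite E; apply: cone_genZ (cone_gen_v lS').
  - rewrite E; set lam := fun s => if s == l then 0 else mu s.
    have -> : \sum_(s in S' | s != l) mu s *: v s = \sum_(s in S') lam s *: v s.
      by rewrite [RHS](bigD1 l) //= /lam eqxx scale0r add0r;
        apply: eq_bigr => s /andP[_ /negbTE ->].
    by apply: cone_gen_sum => s _; rewrite /lam; case: ifP.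
  - by rewrite vk [RHS](bigD1 l).
have t_gt0 : 0 < t.
  by rewrite lt_def t0 andbT; apply: contraNneq mul0 => t0'; rewrite e t0' scale0r.
have mu_gt0 : 0 < mu l.
  by rewrite lt_def mu0 andbT; apply: contraNneq mul0 => mu0'; rewrite mu0' scale0r.
exists l => //; rewrite eqEsubset; split; first exact: cone_gen1_sub e.
by apply: cone_gen1_sub (esym e) => //; exact: ltW.
Qed.

Lemma cone_gen_inj S S' : ray_generators v cones -> S \in cones -> S' \in cones ->
  cone_gen v S = cone_gen v S' -> S = S'.
Proof.
move=> [rays rays_inj].
suff sub T T' : T \in cones -> cone_gen v T = cone_gen v T' -> (T \subset T')%SET.
  by move=> Sc S'c E; apply/eqP; rewrite finset.eqEsubset (sub _ _ Sc E) (sub _ _ S'c (esym E)).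
move=> Tc E; apply/fintype.subsetP => k kT.
by have [l lT' /rays_inj <-] := cone_gen_eq_ray Tc (rays k) kT E.
Qed.

Lemma cone_gen_dotp_eq0 S lam p x : {in S, forall i, 0 < lam i} ->
  {in S, forall s, 0 <= dotp (v s) p} -> dotp (\sum_(i in S) lam i *: v i) p = 0 ->
  cone_gen v S x -> dotp x p = 0.
Proof.
move=> lam_gt0 p_ge0; rewrite dotp_suml => /psumr_eq0P terms0 [mu [_ ->]].
rewrite dotp_suml big1 // => s sS.
have /eqP := terms0 (fun s sS => mulr_ge0 (ltW (lam_gt0 s sS)) (p_ge0 s sS)) s sS.
by rewrite mulf_eq0 gt_eqF ?lam_gt0 //= => /eqP ->; rewrite mulr0.
Qed.

Lemma relint_cone_gen_pos S u : S \in cones -> relint (cone_gen v S) u ->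
  exists2 lam, {in S, forall i, 0 < lam i} & u = \sum_(i in S) lam i *: v i.
Proof.
move=> Sc [[lam [lam0 eu]] [A [oA [Au sub]]]].
exists lam => // i iS; rewrite lt_def lam0 andbT; apply/negP => /eqP lami0.
(* Then u - t v_i, a point of the affine hull close to u, would lie in the cone
   with a negative i-th coefficient. *)
have [t t0 At] := open_translate_small (- v i) oA Au.
have up : cone_gen v S (u + t *: v i).
  rewrite eu -(sum_delta_v iS) scaler_sumr -big_split /=.
  under eq_bigr do rewrite scalerA -scalerDl.
  by apply: cone_gen_sum => s _; rewrite addr_ge0 // mulr_ge0 ?ler0n // ltW.
have [mu [mu0 emu]] : cone_gen v S (u + t *: - v i).
  apply: sub; split => //.
  have -> : u + t *: - v i = (1 - - 1) *: u + (- 1) *: (u + t *: v i).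
    by rewrite opprK scalerDl scale1r scaleN1r opprD addrA addrK scalerN.
  by apply: aff_hull_line up; rewrite eu; exact: cone_gen_sum.
have e2 : \sum_(s in S) mu s *: v s = \sum_(s in S) (lam s - t * (s == i)%:R) *: v s.
  rewrite -emu eu scalerN -(sum_delta_v iS) scaler_sumr -sumrN -big_split /=.
  by apply: eq_bigr => s _; rewrite scalerBl scalerA.
have := simplicial_coef_uniq Sc e2 iS; rewrite eqxx lami0 mulr1 sub0r => mui.
by have := mu0 i; rewrite mui oppr_ge0 leNgt t0.
Qed.

End SimplicialCone.

Section NormalCone.
Variables (R : realType) (d k : nat) (pts : 'I_k -> 'rV[R]_d).
Hypothesis k_gt0 : (0 < k)%N.
Implicit Types (c u : 'rV[R]_d) (f j : 'I_k).

Lemma argmax_pts_nonempty c : exists f, argmax_pts pts c f.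
Proof.
pose i0 := Ordinal k_gt0; pose F i := dotp c (pts i).
exists (Order.arg_max i0 xpredT F) => j.
by case: (@arg_maxP _ _ _ i0 xpredT F isT) => i _ /(_ j isT).
Qed.

Lemma argmax_ptsN_lt c f j :
  argmax_pts pts c f -> ~ argmax_pts pts c j -> dotp c (pts j) < dotp c (pts f).
Proof.
move=> cf cNj; rewrite ltNge; apply/negP => le_fj.
by apply: cNj => i; exact: le_trans (cf i) le_fj.
Qed.

Lemma relint_normal_cone_self c : relint (normal_cone pts c) c.
Proof.
have [f0 cf0] := argmax_pts_nonempty c.
pose B := [set y | forall j, ~ argmax_pts pts c j -> dotp y (pts j) < dotp y (pts f0)].
split => //; exists (interior B); split; first exact: open_interior.
split.
  apply: (filter_forall (nbhs_filter c)) => j.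
  have [cj|cNj] := pselect (argmax_pts pts c j); first by apply: nearW.
  have : 0 < dotp c (pts f0 - pts j).
    by rewrite dotpBr subr_gt0; exact: argmax_ptsN_lt.
  move/(cvgr_gt _ (dotp_continuous (p := pts f0 - pts j) (x := c))).
  by apply: filterS => y; rewrite dotpBr subr_gt0.
move=> y [/interior_subset By aff_y] f cf j.
have eq_f f' : argmax_pts pts c f' -> dotp y (pts f') = dotp y (pts f).
  move=> cf'; apply/eqP; rewrite -subr_eq0 -dotpBr; apply/eqP.
  apply: aff_hull_dotp0 aff_y => x Nx; rewrite dotpBr; apply/eqP.
  by rewrite subr_eq0 eq_le (Nx _ cf' f) (Nx _ cf f').
have [cj|cNj] := pselect (argmax_pts pts c j); first by rewrite eq_f.
by rewrite -(eq_f _ cf0); apply/ltW/By.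
Qed.

Lemma relint_normal_cone_argmax c0 u : relint (normal_cone pts c0) u ->
  argmax_pts pts u = argmax_pts pts c0.
Proof.
move=> [Nu [A [oA [Au sub]]]]; rewrite eqEsubset; split; last exact: Nu.
move=> j uj; apply: contrapT => c0Nj.
have [f0 c0f0] := argmax_pts_nonempty c0.
have lt_jf0 := argmax_ptsN_lt c0f0 c0Nj.
(* Stepping from u away from c0 stays in the normal cone, but makes j beat f0,
   since j and f0 tie at u while f0 beats j at c0. *)
have [t t_gt0 At] := open_translate_small (u - c0) oA Au.
have : normal_cone pts c0 ((1 - - t) *: u + (- t) *: c0).
  apply: sub; split; last exact: aff_hull_line.
  suff <- : u + t *: (u - c0) = (1 - - t) *: u + (- t) *: c0 by [].
  by rewrite scalerBr scalerBl scale1r scaleNr opprK scaleNr addrA.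
move=> /(_ f0 c0f0 j); rewrite !dotpDl !dotpZl.
have -> : dotp u (pts j) = dotp u (pts f0) by apply/eqP; rewrite eq_le uj (Nu _ c0f0).
by nra.
Qed.

End NormalCone.

Section Matchings.
Variables (n m : nat).
Implicit Types (G : {set 'I_n * 'I_m}).

Lemma has_matching_leq G s : has_matching G s -> (s <= m)%N.
Proof.
move=> [M [_ <- disj]].
have <- : #|[set e.2 | e in M]%SET| = #|M|.
  apply: card_in_imset => e1 e2 e1M e2M e12; apply/eqP; apply: contraT => ne.
  by have [_] := disj _ _ e1M e2M ne; rewrite e12 eqxx.
by rewrite -[X in (_ <= X)%N]card_ord max_card.
Qed.

Lemma has_matching_inj G (g : 'I_n -> 'I_m) :
  injective g -> (forall i, (i, g i) \in G) -> has_matching G n.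
Proof.
move=> g_inj iG; exists [set (i, g i) | i in [set: 'I_n]]%SET; split.
- by apply/fintype.subsetP => _ /imsetP[i _ ->].
- by rewrite card_imset ?cardsT ?card_ord // => i i' [].
- move=> _ _ /imsetP[i1 _ ->] /imsetP[i2 _ ->] ne /=.
  have ne12 : i1 != i2 by apply: contraNneq ne => ->.
  by split => //; rewrite (inj_eq g_inj).
Qed.

End Matchings.

Section PolytopalFan.
Variables (R : realType) (d n : nat) (v : 'I_n -> 'rV[R]_d).
Variables (cones : {set {set 'I_n}}) (k : nat) (pts : 'I_k -> 'rV[R]_d).
Hypothesis hs : simplicial v cones.
Hypothesis hr : ray_generators v cones.
Hypothesis k_gt0 : (0 < k)%N.
Hypothesis fanE : fan_cones v cones = normal_fan pts.
Implicit Types (S : {set 'I_n}) (u : 'rV[R]_d).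

Lemma cone_gen_normal S : S \in cones -> exists c0, cone_gen v S = normal_cone pts c0.
Proof.
move=> Sc; have : fan_cones v cones (cone_gen v S) by exists S.
by rewrite fanE => -[c0 ->]; exists c0.
Qed.

Lemma fan_cover u : exists2 S, S \in cones & cone_gen v S = normal_cone pts u.
Proof.
have : normal_fan pts (normal_cone pts u) by exists u.
by rewrite -fanE => -[S Sc E]; exists S.
Qed.

Lemma relint_cone_genP S u : S \in cones ->
  relint (cone_gen v S) u <-> cone_gen v S = normal_cone pts u.
Proof.
move=> Sc; have [c0 ->] := cone_gen_normal Sc; split => [|->].
  by move/relint_normal_cone_argmax => /(_ k_gt0); rewrite /normal_cone => ->.
exact: relint_normal_cone_self.
Qed.

Lemma relint_cone_gen_uniq S S' u : S \in cones -> S' \in cones ->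
  relint (cone_gen v S) u -> relint (cone_gen v S') u -> S = S'.
Proof.
move=> Sc S'c /(relint_cone_genP _ Sc) E /(relint_cone_genP _ S'c) E'.
by apply: (cone_gen_inj hs hr Sc S'c); rewrite E E'.
Qed.

Lemma relint_cone_gen_sum S (lam : 'I_n -> R) : S \in cones ->
  {in S, forall i, 0 < lam i} -> relint (cone_gen v S) (\sum_(i in S) lam i *: v i).
Proof.
move=> Sc lam_gt0; set u := \sum_(i in S) lam i *: v i.
have [c0 E] := cone_gen_normal Sc.
apply/(relint_cone_genP _ Sc); rewrite E /normal_cone.
have Nu : normal_cone pts c0 u by rewrite -E; apply: cone_gen_sum => i /lam_gt0/ltW.
congr (fun A => [set c | A `<=` argmax_pts pts c]).
rewrite eqEsubset; split => [|j uj]; first exact: Nu.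
have [f0 c0f0] := argmax_pts_nonempty pts k_gt0 c0.
suff : dotp c0 (pts f0 - pts j) = 0.
  by rewrite dotpBr => /eqP; rewrite subr_eq0 => /eqP e i; rewrite -e; exact: c0f0.
apply: (cone_gen_dotp_eq0 (v := v) lam_gt0); last by rewrite E.
  move=> s sS; have : normal_cone pts c0 (v s) by rewrite -E; exact: cone_gen_v.
  by move=> /(_ f0 c0f0 j); rewrite dotpBr subr_ge0.
by rewrite dotpBr; apply/eqP; rewrite subr_eq0 eq_le (Nu _ c0f0 j) uj.
Qed.

Lemma coord_gt0 S u i : S \in cones -> relint (cone_gen v S) u ->
  (0 < Defs.coord v cones u i) = (i \in S).
Proof.
move=> Sc rS; have [lam lam_gt0 eu] := relint_cone_gen_pos hs Sc rS.
rewrite /Defs.coord; case: pselect => [ex|]; last first.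
  case; exists (fun i => if i \in S then lam i else 0); exists S => //.
  split=> // [i' /negbTE -> //|]; by rewrite eu; apply: eq_bigr => s ->.
case: (cid ex) => mu [S' S'c [rS' mu0 emu]] /=.
have S'E := relint_cone_gen_uniq Sc S'c rS rS'; subst S'.
have [iS|iNS] := boolP (i \in S); last by rewrite mu0 // ltxx.
by rewrite (simplicial_coef_uniq hs Sc (etrans (esym emu) eu) iS) lam_gt0.
Qed.

Variable m : nat.
Implicit Types (sig : 'I_m -> {set 'I_n}) (U : 'M[R]_(m, d)).
Implicit Types (G : {set 'I_n * 'I_m}) (C : set 'M[R]_(m, d)).

Definition cell sig : set 'M[R]_(m, d) := [set U | forall j, cone_gen v (sig j) (row j U)].

Definition relint_cell sig : set 'M[R]_(m, d) :=
  [set U | forall j, relint (cone_gen v (sig j)) (row j U)].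

Definition cell_graph sig : {set 'I_n * 'I_m} := [set ij | ij.1 \in sig ij.2].

Definition nbr G j : {set 'I_n} := [set i | (i, j) \in G].

Definition sum_gens sig : 'M[R]_(m, d) := \matrix_j \sum_(s in sig j) v s.

Lemma nbr_cell_graph sig : nbr (cell_graph sig) = sig.
Proof. by apply: funext => j; apply/setP => i; rewrite !inE. Qed.

Lemma cell_graph_nbr G : cell_graph (nbr G) = G.
Proof. by apply/setP => -[i j]; rewrite !inE. Qed.

Lemma graphU_relint_cell sig U : (forall j, sig j \in cones) ->
  relint_cell sig U -> graphU v cones U = cell_graph sig.
Proof. by move=> sigc rU; apply/setP => -[i j]; rewrite !inE /= (coord_gt0 _ (sigc j)). Qed.

Lemma relint_cell_nbr_graphU U :
  (forall j, nbr (graphU v cones U) j \in cones) /\ relint_cell (nbr (graphU v cones U)) U.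
Proof.
suff nbrE j : exists2 S, S \in cones &
    relint (cone_gen v S) (row j U) /\ nbr (graphU v cones U) j = S.
  by split => j; have [S Sc [rS ->]] := nbrE j.
have [S Sc E] := fan_cover (row j U).
have rS : relint (cone_gen v S) (row j U) by apply/(relint_cone_genP _ Sc).
by exists S => //; split => //; apply/setP => i; rewrite !inE /= (coord_gt0 _ Sc).
Qed.

Lemma UG_cell_graph sig : (forall j, sig j \in cones) ->
  UG v cones (cell_graph sig) = relint_cell sig.
Proof.
move=> sigc; rewrite eqEsubset; split => U; last exact: graphU_relint_cell.
by move=> /= UG; have [_] := relint_cell_nbr_graphU U; rewrite UG nbr_cell_graph.
Qed.

Lemma graphsG_cell_graph G : graphsG v cones G ->
  exists2 sig, (forall j, sig j \in cones) & G = cell_graph sig.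
Proof.
move=> [U <-]; exists (nbr (graphU v cones U)); last by rewrite cell_graph_nbr.
exact: (relint_cell_nbr_graphU U).1.
Qed.

Lemma relint_cell_add_sum_gens sig U t : (forall j, sig j \in cones) ->
  cell sig U -> 0 < t -> relint_cell sig (U + t *: sum_gens sig).
Proof.
move=> sigc cU t_gt0 j; have [lam [lam0 eU]] := cU j.
have -> : row j (U + t *: sum_gens sig) = \sum_(s in sig j) (lam s + t) *: v s.
  rewrite linearD linearZ /= eU rowK scaler_sumr -big_split /=.
  by apply: eq_bigr => s _; rewrite scalerDl.
by apply: relint_cone_gen_sum => // s _; exact: ltr_wpDl.
Qed.

Lemma closed_cell sig : (forall j, sig j \in cones) -> closed (cell sig).
Proof.
move=> sigc U clU j; have [c0 E] := cone_gen_normal (sigc j).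
rewrite E => f c0f a; rewrite leNgt; apply/negP => lt_fa.
have : \forall Y \near U, dotp (row j Y) (pts f - pts a) < 0.
  apply: (cvgr_lt _ (dotp_row_continuous (j := j) (p := pts f - pts a) (x := U))).
  by rewrite dotpBr subr_lt0.
move=> /clU [Y [cY]]; have := cY j; rewrite E => /(_ f c0f a).
by rewrite dotpBr subr_lt0 ltNge => ->.
Qed.

Lemma closure_relint_cell sig : (forall j, sig j \in cones) ->
  closure (relint_cell sig) = cell sig.
Proof.
move=> sigc; rewrite eqEsubset; split.
  rewrite [X in _ `<=` X](closure_id _).1; last exact: closed_cell.
  by apply: closureS => U rU j; exact: (rU j).1.
move=> U cU B nB.
have [t t_gt0 Bt] := open_translate_small (sum_gens sig) (@open_interior _ B) nB.
exists (U + t *: sum_gens sig); split; first exact: relint_cell_add_sum_gens.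
exact: interior_subset.
Qed.

Lemma cell_row_sub sig sig' j :
  cell sig `<=` cell sig' -> cone_gen v (sig j) `<=` cone_gen v (sig' j).
Proof.
move=> sub u su; pose Z := \matrix_(a < m) (if a == j then u else 0).
have : cell sig' Z.
  by apply: sub => a; rewrite rowK; case: eqP => [->|_] //; exact: cone_gen0.
by move=> /(_ j); rewrite rowK eqxx.
Qed.

Lemma cell_inj sig sig' : (forall j, sig j \in cones) -> (forall j, sig' j \in cones) ->
  cell sig = cell sig' -> sig = sig'.
Proof.
move=> sigc sig'c E; apply: funext => j.
apply: (cone_gen_inj hs hr (sigc j) (sig'c j)).
by rewrite eqEsubset; split; apply: cell_row_sub; rewrite E.
Qed.

Lemma cell_graph_graphsG sig : (forall j, sig j \in cones) ->
  graphsG v cones (cell_graph sig).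
Proof.
move=> sigc; exists (0 + 1 *: sum_gens sig); apply: graphU_relint_cell => //.
by apply: relint_cell_add_sum_gens => // j; rewrite row0; exact: cone_gen0.
Qed.

Lemma UpsilonP C : Upsilon v cones C <-> exists sig,
  [/\ forall j, sig j \in cones, ~ has_matching (cell_graph sig) n & C = cell sig].
Proof.
split => [[G [gG noM] ->]|[sig [sigc noM ->]]].
  have [sig sigc GE] := graphsG_cell_graph gG; subst G.
  by exists sig; rewrite UG_cell_graph // closure_relint_cell.
exists (cell_graph sig); first by split => //; exact: cell_graph_graphsG.
by rewrite UG_cell_graph // closure_relint_cell.
Qed.

Lemma Upsilon_sub_prod_fan : Upsilon (m := m) v cones `<=` prod_fan v cones.
Proof. by move=> C /UpsilonP[sig [sigc _ ->]]; exists sig. Qed.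

Lemma cell_UpsilonP sig : (forall j, sig j \in cones) ->
  Upsilon v cones (cell sig) <-> ~ has_matching (cell_graph sig) n.
Proof.
move=> sigc; split => [/UpsilonP[sig' [sig'c noM E]]|noM].
  by rewrite (cell_inj sigc sig'c E).
by apply/UpsilonP; exists sig.
Qed.

Lemma exists_cell_perfect_matching : (n <= m)%N ->
  exists2 sig, (forall j, sig j \in cones) & has_matching (cell_graph sig) n.
Proof.
move=> le_nm; have [S0 S0c _] := fan_cover 0.
pose sig (j : 'I_m) := if insub (val j) is Some i then [set i]%SET else S0.
exists sig => [j|]; first by rewrite /sig; case: insub => [i|] //; exact: hr.1.
apply: (has_matching_inj (g := widen_ord le_nm)) => [i i' [] /ord_inj //|i].
by rewrite inE /= /sig (valK i) set11.
Qed.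

End PolytopalFan.

Theorem lemma3p11 (R : realType) (d n m : nat)
    (v : 'I_n -> 'rV[R]_d) (cones : {set {set 'I_n}}) :
  simplicial v cones -> polytopal v cones -> ray_generators v cones ->
  (1 <= m)%N ->
  (@Upsilon R d n m v cones `<` @prod_fan R d n m v cones <-> (n <= m)%N).
Proof.
(* The equivalence holds for m = 0 too. *)
move=> hs [k [pts [k_gt0 fanE]]] hr _.
have cellP := cell_UpsilonP hs hr k_gt0 fanE.
split => [[_ prod_fan_not_sub]|le_nm].
  rewrite leqNgt; apply/negP => lt_mn; apply: prod_fan_not_sub => _ [sig [sigc ->]].
  by apply/cellP => // /has_matching_leq; rewrite leqNgt lt_mn.
split; first exact: (Upsilon_sub_prod_fan hs hr k_gt0 fanE).
have [sig sigc matching] := exists_cell_perfect_matching hr fanE le_nm.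
move=> /(_ (cell v sig)) prod_fan_sub.
have : Upsilon v cones (cell v sig) by apply: prod_fan_sub; exists sig.
by move=> /(cellP _ _ sigc).
Qed.
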